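(* Let $k\ge 1$, $n\ge 100k$ and $3\le r<s\le 10k$ be integers. Then \[ \lambda(T_{n-s+2,2}\circ K_{s-1})<\lambda(T_{n-r+2,2}\circ K_{r-1}). \]
   Context: $\lambda(G)$ denotes the spectral radius of the adjacency matrix of $G$. $T_{m,2}$ denotes the complete bipartite graph on $m$ vertices with parts of sizes $\lfloor m/2\rfloor$ and $\lceil m/2\rceil$. For $t\ge 3$, $T_{n-t+2,2}\circ K_{t-1}$ is the $n$-vertex graph obtained by identifying a vertex of the complete graph $K_{t-1}$ with a vertex of the smaller part (of size $\lfloor (n-t+2)/2\rfloor$) of $T_{n-t+2,2}$. *)

From mathcomp Require Import all_boot all_order all_algebra all_field.
Set Implicit Arguments. Unset Strict Implicit. Unset Printing Implicit Defensive.
Import Order.TTheory GRing.Theory Num.Theory.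
Local Open Scope ring_scope.

(* Spectral radius of a square complex (algebraic) matrix: the maximum modulus
   of the roots (with multiplicity) of its characteristic polynomial, i.e. of
   its eigenvalues. *)
Definition eigen_seq (n : nat) (A : 'M[algC]_n) : seq algC :=
  sval (closed_field_poly_normal (char_poly A)).

Definition spectral_radius (n : nat) (A : 'M[algC]_n) : algC :=
  \big[Num.max/0]_(z <- eigen_seq A) `|z|.

(* The graph T_{n-t+2,2} o K_{t-1} on vertex set 'I_n (for 2 <= t <= n).
   Vertices 0..a-1 : smaller part of T_{m,2};  a..m-1 : larger part;
   the clique K_{t-1} has vertex set {0} U {m, ..., n-1} (vertex 0 is the
   identified vertex, lying in the smaller part). *)
Definition tk_adj (n t : nat) (i j : 'I_n) : bool :=
  let m := (n - t + 2)%N in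
  let a := (m %/ 2)%N in
  [&& (i < m)%N, (j < m)%N & ((i < a)%N != (j < a)%N)]
  || [&& i != j, ((i == 0 :> nat) || (m <= i)%N) & ((j == 0 :> nat) || (m <= j)%N)].

Definition tk_adjmx (n t : nat) : 'M[algC]_n :=
  \matrix_(i, j) (tk_adj t i j)%:R.

From mathcomp Require Import all_boot all_order all_algebra all_field.
From mathcomp Require Import zify.
Import Order.TTheory GRing.Theory Num.Theory.
Local Open Scope ring_scope.
Local Open Scope sesquilinear_scope.

(* Let m = n - t + 2, a = floor(m/2), b = m - a and c = t - 2, and split the vertices of
   T_{m,2} o K_{t-1} into four classes: the identified vertex 0, the other a - 1 vertices
   of the smaller part, the b vertices of the larger part and the other c vertices of the
   clique.  This partition is equitable: the adjacency matrix A maps class-constant vectors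
   to class-constant vectors, so both spectral estimates reduce to computations on four
   numbers.
   Upper bound (10t <= n): the positive class-constant weight w = (2m+5, 4b, 2m+1, 8)
   satisfies A w <= (2m+1)/4 w, which bounds every eigenvalue by (2m+1)/4
   (Collatz-Wielandt).
   Lower bound: the Rayleigh quotient of the indicator of T_{m,2} is 2ab/m >= (m^2-1)/(2m).
   From t = r to t = s the parameter m drops by at least one, and
   (2(m-1)+1)/4 < (m^2-1)/(2m) as soon as m > 2. *)

(* |z| sum_i |v_i| y_i <= sum_i |v_i| (A y)_i <= U sum_i |v_i| y_i for a left eigenvector v. *)
Lemma eigenvalue_norm_le_weight (C : numFieldType) n (A : 'M[C]_n) (y : 'cV[C]_n) (U z : C) :
  (forall i j, 0 <= A i j) -> (forall i, 0 < y i 0) ->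
  (forall i, (A *m y) i 0 <= U * y i 0) -> eigenvalue A z -> `|z| <= U.
Proof.
move=> A_ge0 y_gt0 Ay_le /eigenvalueP[v vAz v_neq0].
pose S := \sum_i `|v 0 i| * y i 0.
have S_gt0 : 0 < S.
  have /existsP[i vi_neq0] : [exists i, v 0 i != 0].
    apply: contraNT v_neq0; rewrite negb_exists => /forallP v0.
    by apply/eqP/rowP => i; rewrite mxE; apply/eqP; rewrite -[_ == _]negbK v0.
  rewrite /S (bigD1 i) //=; apply: ltr_wpDr; last by rewrite mulr_gt0 ?normr_gt0.
  by apply: sumr_ge0 => j _; exact: mulr_ge0 (normr_ge0 _) (ltW (y_gt0 j)).
rewrite -(ler_pM2r S_gt0) /S !mulr_sumr.
have zvE j : `|z| * `|v 0 j| = `|\sum_i v 0 i * A i j|.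
  by have := congr1 (fun u : 'rV_n => `|u 0 j|) vAz; rewrite !mxE normrM => ->.
apply: (@le_trans _ _ (\sum_j \sum_i `|v 0 i| * A i j * y j 0)).
  apply: ler_sum => j _; rewrite mulrA zvE -mulr_suml ler_wpM2r ?(ltW (y_gt0 j)) //.
  apply: le_trans (ler_norm_sum _ _ _) _; apply: ler_sum => i _.
  by rewrite normrM (ger0_norm (A_ge0 i j)).
rewrite exchange_big /=; apply: ler_sum => i _.
under eq_bigr do rewrite -mulrA.
rewrite -mulr_sumr mulrCA ler_wpM2l //.
by have := Ay_le i; rewrite mxE.
Qed.

(* With A = P^* D P for a unitary P, the form is sum_i d_i |y_i|^2 where y = x P^* and each
   d_i is a real eigenvalue of A. *)
Lemma hermitian_rayleigh_le (C : numClosedFieldType) n (A : 'M[C]_n) (x : 'rV[C]_n) (U : C) :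
  A \is hermsymmx -> (forall z, eigenvalue A z -> `|z| <= U) ->
  (x *m A *m x^t*) 0 0 <= U * (x *m x^t*) 0 0.
Proof.
move=> A_herm eig_le; have /orthomx_spectralP := hermitian_normalmx A_herm.
have d_real := hermitian_spectral_diag_real A_herm.
set P := spectralmx A; set d := spectral_diag A in d_real * => A_eq.
have P_unitary : P \is unitarymx := spectral_unitarymx A.
rewrite invmx_unitary // in A_eq.
have d_eig i : eigenvalue A (d 0 i).
  apply/eigenvalueP; exists (row i P).
    rewrite A_eq !mulmxA -row_mul (unitarymxP P_unitary) row1.
    by rewrite -rowE row_diag_mx -scalemxAl -rowE.
  apply: contra_neq (oner_neq0 C) => Pi0.
  have : row i (P *m P^t*) 0 i = 1 by rewrite (unitarymxP P_unitary) row1 mxE !eqxx.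
  by rewrite row_mul Pi0 mul0mx mxE.
pose y := x *m P^t*.
have yP : y *m P = x by rewrite mulmxKtV.
have -> : x *m A *m x^t* = y *m diag_mx d *m y^t*.
  by rewrite A_eq /y trmx_mul map_mxM trmxCK !mulmxA.
clearbody y; rewrite -yP trmx_mul map_mxM mulmxA mulmxtVK // mul_mx_diag !mxE mulr_sumr.
apply: ler_sum => i _; rewrite !mxE mulrAC [U * _]mulrC ler_wpM2l ?mul_conjC_ge0 //.
exact: le_trans (real_ler_norm (mxOverP d_real 0 i)) (eig_le _ (d_eig i)).
Qed.

Lemma mem_eigen_seq n (A : 'M[algC]_n) z : (z \in eigen_seq A) = eigenvalue A z.
Proof.
rewrite eigenvalue_root_char /eigen_seq; case: closed_field_poly_normal => rs /= rsE.
by rewrite [in RHS]rsE (monicP (char_poly_monic A)) scale1r root_prod_XsubC.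
Qed.

Lemma spectral_radius_le n (A : 'M[algC]_n) U :
  0 <= U -> (forall z, eigenvalue A z -> `|z| <= U) -> spectral_radius A <= U.
Proof.
move=> U_ge0 eig_le; rewrite /spectral_radius big_seq.
elim/big_ind: _ => // [x y xU yU | z]; first by rewrite /Num.max; case: ifP.
by rewrite mem_eigen_seq => /eig_le.
Qed.

Lemma norm_le_spectral_radius n (A : 'M[algC]_n) z :
  eigenvalue A z -> `|z| <= spectral_radius A.
Proof.
rewrite -mem_eigen_seq /spectral_radius; elim: (eigen_seq A) => [//|x s IH].
have max_real : \big[Num.max/0]_(y <- s) `|y| \is Num.real.
  by apply: bigmax_real => // y _; apply: normr_real.
rewrite big_cons inE comparable_le_max ?real_comparable ?normr_real //.
by case/orP => [/eqP-> | /IH->]; rewrite ?lexx ?orbT.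
Qed.

Lemma sumr_nat_const_on (V : nmodType) (F : nat -> V) (x : V) lo hi :
  (forall i, (lo <= i < hi)%N -> F i = x) -> \sum_(lo <= i < hi) F i = x *+ (hi - lo).
Proof. by move=> Fx; rewrite -sumr_const_nat; apply: eq_big_nat. Qed.

Lemma sumr_nat_neq (V : nmodType) (x : V) lo hi j :
  \sum_(lo <= i < hi) x *+ (i != j) = x *+ (hi - lo - (lo <= j < hi)).
Proof.
rewrite sumrMnr -big_mkcond /= sum1_count.
have := count_predC (pred1 j) (index_iota lo hi).
rewrite count_uniq_mem ?iota_uniq // mem_index_iota size_iota.
by move=> <-; rewrite addKn.
Qed.

(* [tk_adj] on natural-number indices, so that sums over 'I_n can be cut into ranges. *)
Definition tk_adjn (n t i j : nat) : bool :=
  let m := (n - t + 2)%N in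
  let a := (m %/ 2)%N in
  [&& (i < m)%N, (j < m)%N & ((i < a)%N != (j < a)%N)]
  || [&& i != j, ((i == 0) || (m <= i)%N) & ((j == 0) || (m <= j)%N)].

Lemma tk_adjmxE n t (i j : 'I_n) : tk_adjmx n t i j = (tk_adjn n t i j)%:R.
Proof. by rewrite mxE. Qed.

Lemma tr_tk_adjmx n t : (tk_adjmx n t)^T = tk_adjmx n t.
Proof. by apply/matrixP => i j; rewrite mxE !tk_adjmxE /tk_adjn; congr (_%:R); lia. Qed.

Lemma tk_adjmx_hermsym n t : tk_adjmx n t \is hermsymmx.
Proof.
apply: realsym_hermsym; last by apply/mxOverP => i j; rewrite mxE realn.
by apply/is_hermitianmxP; rewrite expr0 scale1r map_mx_id ?tr_tk_adjmx.
Qed.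

Definition tk_block (n t : nat) (x0 x1 x2 x3 : algC) (i : nat) : algC :=
  if i == 0%N then x0 else if (i < (n - t + 2) %/ 2)%N then x1
  else if (i < n - t + 2)%N then x2 else x3.

Definition tk_lift (n t : nat) (x0 x1 x2 x3 : algC) : 'rV[algC]_n :=
  \row_(i < n) tk_block n t x0 x1 x2 x3 i.

Section Blocks.
Variables n t : nat.
Hypotheses (t_ge2 : (2 <= t)%N) (t_le_n : (t <= n)%N).
Local Notation m := (n - t + 2)%N.
Local Notation a := (m %/ 2)%N.
Local Notation b := (m - a)%N.
Local Notation c := (n - m)%N.

Lemma tk_adjn0 j : tk_adjn n t 0 j = (a <= j)%N.
Proof. rewrite /tk_adjn; lia. Qed.

Lemma tk_adjn_small i j : (1 <= i < a)%N -> tk_adjn n t i j = (a <= j < m)%N.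
Proof. rewrite /tk_adjn; lia. Qed.

Lemma tk_adjn_large i j : (a <= i < m)%N -> tk_adjn n t i j = (j < a)%N.
Proof. rewrite /tk_adjn; lia. Qed.

Lemma tk_adjn_clique i j :
  (m <= i)%N -> tk_adjn n t i j = (i != j) && ((j == 0) || (m <= j))%N.
Proof. rewrite /tk_adjn; lia. Qed.

Lemma tk_block_small x0 x1 x2 x3 i : (1 <= i < a)%N -> tk_block n t x0 x1 x2 x3 i = x1.
Proof. by rewrite /tk_block => ?; repeat case: ifP => // ?; lia. Qed.

Lemma tk_block_large x0 x1 x2 x3 i : (a <= i < m)%N -> tk_block n t x0 x1 x2 x3 i = x2.
Proof. by rewrite /tk_block => ?; repeat case: ifP => // ?; lia. Qed.

Lemma tk_block_clique x0 x1 x2 x3 i : (m <= i)%N -> tk_block n t x0 x1 x2 x3 i = x3.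
Proof. by rewrite /tk_block => ?; repeat case: ifP => // ?; lia. Qed.

Lemma sum_tk_split (V : nmodType) (F : nat -> V) :
  \sum_(i < n) F i =
  F 0%N + \sum_(1 <= i < a) F i + \sum_(a <= i < m) F i + \sum_(m <= i < n) F i.
Proof.
rewrite -(big_mkord xpredT) big_ltn; last lia.
by rewrite -!addrA -!big_cat_nat //; lia.
Qed.

Lemma tk_lift_mul x0 x1 x2 x3 :
  tk_lift n t x0 x1 x2 x3 *m tk_adjmx n t =
  tk_lift n t (x2 *+ b + x3 *+ c) (x2 *+ b) (x0 + x1 *+ a.-1) (x0 + x3 *+ c.-1).
Proof.
apply/rowP => j; rewrite !mxE.
under eq_bigr do rewrite tk_adjmxE mxE.
rewrite (@sum_tk_split _ (fun i => tk_block n t x0 x1 x2 x3 i * (tk_adjn n t i j)%:R)).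
rewrite /= tk_adjn0 (@sumr_nat_const_on _ _ (x1 * (a <= j < m)%N%:R)); last first.
  by move=> i ia; rewrite tk_block_small ?tk_adjn_small.
rewrite (@sumr_nat_const_on _ _ (x2 * (j < a)%N%:R)); last first.
  by move=> i ia; rewrite tk_block_large ?tk_adjn_large.
rewrite (@eq_big_nat _ _ _ _ _ _
  (fun i => (x3 * ((j == 0 :> nat) || (m <= j))%N%:R) *+ (i != j))); last first.
  move=> i /andP[mi _]; rewrite tk_block_clique ?tk_adjn_clique //.
  by case: (i != j); rewrite ?mulr0 ?mulr1n ?mulr0n.
rewrite sumr_nat_neq /tk_block eqxx (ltn_ord j) andbT.
rewrite [(a <= j)%N]leqNgt [(m <= j)%N]leqNgt.
have a_gt0 : (0 < a)%N by lia.
have a_le_m : (a <= m)%N by lia.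
case: ifP => [/eqP j0 | j0]; [| case: ifP => ja; [| case: ifP => jm]] => /=;
  [rewrite j0 a_gt0 (leq_trans a_gt0 a_le_m) | rewrite (leq_trans ja a_le_m) | |] => /=;
  by rewrite ?mulr0 ?mul0rn ?mulr1 ?add0r ?addr0 ?subn0 ?subn1.
Qed.

Lemma tk_lift_dot x0 x1 x2 x3 y0 y1 y2 y3 :
  (tk_lift n t x0 x1 x2 x3 *m (tk_lift n t y0 y1 y2 y3)^T) 0 0 =
  x0 * y0 + (x1 * y1) *+ a.-1 + (x2 * y2) *+ b + (x3 * y3) *+ c.
Proof.
rewrite mxE; under eq_bigr do rewrite !mxE.
rewrite (@sum_tk_split _ (fun i => tk_block n t x0 x1 x2 x3 i * tk_block n t y0 y1 y2 y3 i)).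
rewrite /= (@sumr_nat_const_on _ _ (x1 * y1)) => [|i ?]; last by rewrite !tk_block_small.
rewrite (@sumr_nat_const_on _ _ (x2 * y2)) => [|i ?]; last by rewrite !tk_block_large.
rewrite (@sumr_nat_const_on _ _ (x3 * y3)) => [|i /andP[? _]]; last by rewrite !tk_block_clique.
by rewrite /tk_block eqxx subn1.
Qed.

Lemma tk_spectral_radius_le :
  (10 * t <= n)%N -> spectral_radius (tk_adjmx n t) <= (2 * m + 1)%:R / 4.
Proof.
move=> tn.
apply: spectral_radius_le => [|z]; first by rewrite divr_ge0 ?ler0n.
apply: (@eigenvalue_norm_le_weight _ _ _
  (tk_lift n t (2 * m + 5)%:R (4 * b)%:R (2 * m + 1)%:R 8%:R)^T).
- by move=> i j; rewrite tk_adjmxE ler0n.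
- by move=> i; rewrite !mxE /tk_block; repeat case: ifP => _; rewrite ltr0n; lia.
move=> i; rewrite -tr_tk_adjmx -trmx_mul tk_lift_mul !mxE /tk_block.
case: ifP => _; [|case: ifP => _; [|case: ifP => _]];
  rewrite -!mulrnA -?natrD mulrAC ler_pdivlMr ?ltr0n // -!natrM ler_nat; nia.
Qed.

Lemma tk_spectral_radius_ge :
  (2 * (a * b))%:R <= spectral_radius (tk_adjmx n t) * m%:R.
Proof.
pose x := tk_lift n t 1 1 1 0.
have x_real : x^t* = x^T.
  apply/matrixP => i j; rewrite !mxE /tk_block.
  by repeat case: ifP => _; rewrite ?conjC1 ?conjC0.
have xx : (x *m x^T) 0 0 = m%:R.
  rewrite tk_lift_dot !mulr1 mulr0 mul0rn addr0 nat1r -natrD; congr _%:R; lia.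
have xAx : (x *m tk_adjmx n t *m x^T) 0 0 = (2 * (a * b))%:R.
  rewrite tk_lift_mul tk_lift_dot !mulr1 mulr0 !mul0rn !addr0 mulrnDl -!mulrnA -!natrD.
  congr _%:R; nia.
have := @hermitian_rayleigh_le _ _ _ x _ (tk_adjmx_hermsym n t) (@norm_le_spectral_radius _ _).
by rewrite x_real xAx xx.
Qed.

End Blocks.

Theorem lemma2p8 (k n r s : nat) :
  (1 <= k)%N -> (100 * k <= n)%N -> (3 <= r)%N -> (r < s)%N -> (s <= 10 * k)%N ->
  spectral_radius (tk_adjmx n s) < spectral_radius (tk_adjmx n r).
Proof.
move=> k_ge1 n_ge r_ge3 r_lt_s s_le.
have ub := @tk_spectral_radius_le n s ltac:(lia) ltac:(lia) ltac:(lia).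
have lb := @tk_spectral_radius_ge n r ltac:(lia) ltac:(lia).
have m_gt0 : 0 < (n - r + 2)%:R :> algC by rewrite ltr0n; lia.
rewrite -(ltr_pM2r m_gt0); apply: le_lt_trans (ler_wpM2r (ltW m_gt0) ub) (lt_le_trans _ lb).
rewrite mulrAC ltr_pdivrMr ?ltr0n // -!natrM ltr_nat.
nia.
Qed.
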